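(* Let $A$ be a $J^*$-algebra and let $r>1$. Let $T : A \to A$ be a mapping satisfying $T(rx)=rT(x)$ for all $x\in A$, and suppose there exists a function $\varphi: A\times A\times A\to [0, \infty)$ such that $$\lim_{n\to\infty} r^{-n}\varphi(r^n x, r^n y, r^n z)=0 \quad\text{for all } x,y,z\in A,$$ and $$\|T(\lambda x+y+zz^*z)-\lambda T(x)-T(y)-T(z)T(z)^*T(z)\|\leq\varphi(x, y, z)$$ for all $\lambda \in \mathbb{C}$ and all $x, y, z\in A$. Then $T$ is a $J^*$-homomorphism.
   Context: A $J^*$-algebra is a norm-closed complex linear subspace $A$ of a $C^*$-algebra such that $xx^*x\in A$ whenever $x\in A$ (with the norm, involution and product inherited from the ambient $C^*$-algebra). For $J^*$-algebras $A$ and $B$, a $J^*$-homomorphism is a $\mathbb{C}$-linear mapping $T : A \to B$ such that $T(xx^*x)=T(x)T(x)^*T(x)$ for all $x\in A$. *)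

From HB Require Import structures.
From mathcomp Require Import all_boot all_order all_algebra.
From mathcomp Require Import all_classical all_reals all_analysis.
From mathcomp Require Import complex.
Set Implicit Arguments. Unset Strict Implicit. Unset Printing Implicit Defensive.
Import Order.TTheory GRing.Theory Num.Theory.
Import numFieldNormedType.Exports.
Local Open Scope ring_scope.
Local Open Scope complex_scope.

Definition is_Cstar_algebra (R : realType) (V : completeNormedModType R[i])
    (mul : V -> V -> V) (star : V -> V) : Prop :=
  (forall x y z, mul x (mul y z) = mul (mul x y) z) /\
  (forall (a : R[i]) x y z, mul (a *: x + y) z = a *: mul x z + mul y z) /\
  (forall (a : R[i]) x y z, mul z (a *: x + y) = a *: mul z x + mul z y) /\
  (forall (a : R[i]) x y, star (a *: x + y) = (a^*)%C *: star x + star y) /\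
  (forall x, star (star x) = x) /\
  (forall x y, star (mul x y) = mul (star y) (star x)) /\
  (forall x y, `|mul x y| <= `|x| * `|y|) /\
  (forall x, `|mul (star x) x| = `|x| ^+ 2).

Definition is_Jstar_algebra (R : realType) (V : completeNormedModType R[i])
    (mul : V -> V -> V) (star : V -> V) (A : set V) : Prop :=
  [/\ A 0,
      (forall (a : R[i]) x y, A x -> A y -> A (a *: x + y)),
      closed A
    & (forall x, A x -> A (mul (mul x (star x)) x))].

(* T : A -> A (represented as a function on V mapping A into A, whose values
   outside A are irrelevant) is a J*-homomorphism: C-linear on A and
   preserving the triple product x x^* x. *)
Definition is_Jstar_hom (R : realType) (V : completeNormedModType R[i])
    (mul : V -> V -> V) (star : V -> V) (A : set V) (T : V -> V) : Prop :=
  [/\ (forall x y, A x -> A y -> T (x + y) = T x + T y),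
      (forall (a : R[i]) x, A x -> T (a *: x) = a *: T x)
    & (forall x, A x -> T (mul (mul x (star x)) x) = mul (mul (T x) (star (T x))) (T x))].

From HB Require Import structures.
From mathcomp Require Import all_boot all_order all_algebra.
From mathcomp Require Import all_classical all_reals all_analysis.
From mathcomp Require Import complex.
Set Implicit Arguments.
Unset Strict Implicit.
Unset Printing Implicit Defensive.

Import Order.TTheory GRing.Theory Num.Theory.
Import numFieldNormedType.Exports.
Local Open Scope ring_scope.
Local Open Scope complex_scope.
Local Open Scope classical_set_scope.

(* A Hyers-Ulam argument that needs no limit construction, because T already
   commutes with x |-> r x. Evaluating the defect of C-linearity of T at
   (r^n x, r^n y, 0), resp. that of the triple product at (0, 0, r^n z),
   multiplies it by r^n, resp. r^(3n), while its norm stays bounded by the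
   value of phi there. Dividing by r^n and letting n -> oo forces both defects
   to vanish. *)

Lemma scaled_bound_eq0 (R : realType) (V : normedModType R[i]) (r : R)
    (p : nat -> R) (D : V) :
  1 < r -> (fun n : nat => r ^- n * p n) @ \oo --> (0 : R) ->
  (forall n, (r ^+ n)%:C * `|D| <= (p n)%:C) -> D = 0.
Proof.
move=> r1 cvg_p bound; apply/normr0_eq0.
have /complex_realP[k normD] : `|D| \is Num.real by exact: ger0_real.
have k_ge0 : 0 <= k.
  by have := normr_ge0 D; rewrite normD -[0 : R[i]]/(0%:C) lecR.
have k_le n : k <= r ^- n * p n.
  rewrite ler_pdivlMl ?exprn_gt0 ?(lt_trans ltr01 r1) //.
  by have := bound n; rewrite normD -rmorphM lecR.
have k_le0 : k <= 0.
  rewrite -(cvg_lim _ cvg_p) //; apply: limr_ge; first exact: cvgP cvg_p.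
  exact: nearW.
by rewrite normD (@le_anti _ _ k 0) // k_le0 k_ge0.
Qed.

Lemma semilinear0 (K : nzRingType) (U W : lmodType K) (sigma : K -> K)
    (f : U -> W) :
  sigma 1 = 1 -> (forall a x y, f (a *: x + y) = sigma a *: f x + f y) ->
  f 0 = 0.
Proof.
move=> sigma1 f_lin; apply: (addrI (f 0)); rewrite addr0.
by rewrite -{1}[f 0]scale1r -sigma1 -f_lin scale1r addr0.
Qed.

Lemma semilinearZ (K : nzRingType) (U W : lmodType K) (sigma : K -> K)
    (f : U -> W) :
  sigma 1 = 1 -> (forall a x y, f (a *: x + y) = sigma a *: f x + f y) ->
  forall a x, f (a *: x) = sigma a *: f x.
Proof.
move=> sigma1 f_lin a x.
by rewrite -[a *: x]addr0 f_lin (semilinear0 sigma1 f_lin) addr0.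
Qed.

Section TripleProduct.
Variables (R : realType) (V : lmodType R[i]).
Variables (mul : V -> V -> V) (star : V -> V).
Hypothesis mulDl :
  forall (a : R[i]) x y z, mul (a *: x + y) z = a *: mul x z + mul y z.
Hypothesis mulDr :
  forall (a : R[i]) x y z, mul z (a *: x + y) = a *: mul z x + mul z y.
Hypothesis starD :
  forall (a : R[i]) x y, star (a *: x + y) = (a^*)%C *: star x + star y.

Definition triple (w : V) : V := mul (mul w (star w)) w.

Lemma tripleZ (a : R[i]) w : triple (a *: w) = (a * (a^*)%C * a) *: triple w.
Proof.
have mulZl z : forall b x, mul (b *: x) z = b *: mul x z.
  exact: semilinearZ _ (fun a x y => mulDl a x y z).
have mulZr z : forall b x, mul z (b *: x) = b *: mul z x.
  exact: semilinearZ _ (fun a x y => mulDr a x y z).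
have starZ : forall b x, star (b *: x) = (b^*)%C *: star x.
  exact: (semilinearZ (conjc1 _) starD).
by rewrite /triple starZ !(mulZl, mulZr) !scalerA mulrAC.
Qed.

Lemma triple_real_pow (r : R) n w :
  triple ((r ^+ n)%:C *: w) = (r ^+ (3 * n))%:C *: triple w.
Proof.
by rewrite tripleZ conjc_real -!rmorphM mulnC exprM !exprS expr0 mulr1 mulrA.
Qed.

Lemma triple0 : triple 0 = 0.
Proof. by rewrite -(scale0r 0) tripleZ !mul0r !scale0r. Qed.

End TripleProduct.

Section ScalingCommuting.
Variables (R : realType) (V : lmodType R[i]) (A : set V) (T : V -> V) (r : R).
Hypothesis A0 : A 0.
Hypothesis AZ : forall (a : R[i]) x, A x -> A (a *: x).
Hypothesis r_gt1 : 1 < r.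
Hypothesis T_scale : forall x, A x -> T (r%:C *: x) = r%:C *: T x.

Lemma scaling_commuting0 : T 0 = 0.
Proof.
have : (r%:C - 1) *: T 0 = 0.
  by rewrite scalerBl scale1r -T_scale // scaler0 subrr.
move/eqP; rewrite scaler_eq0 subr_eq0 -[1 : R[i]]/(1%:C) (inj_eq (@complexI _)).
by rewrite gt_eqF //= => /eqP.
Qed.

Lemma scaling_commuting_pow n x :
  A x -> T ((r ^+ n)%:C *: x) = (r ^+ n)%:C *: T x.
Proof.
elim: n x => [|n IHn] x Ax; first by rewrite expr0 !scale1r.
have -> : (r ^+ n.+1)%:C = r%:C * (r ^+ n)%:C :> R[i] by rewrite exprS rmorphM.
by rewrite -!scalerA T_scale ?IHn //; apply: AZ.
Qed.

End ScalingCommuting.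

Section ApproximateJstarHom.
Variables (R : realType) (V : completeNormedModType R[i]).
Variables (mul : V -> V -> V) (star : V -> V) (A : set V) (T : V -> V).
Variables (r : R) (phi : V -> V -> V -> R).
Hypothesis mulDl :
  forall (a : R[i]) x y z, mul (a *: x + y) z = a *: mul x z + mul y z.
Hypothesis mulDr :
  forall (a : R[i]) x y z, mul z (a *: x + y) = a *: mul z x + mul z y.
Hypothesis starD :
  forall (a : R[i]) x y, star (a *: x + y) = (a^*)%C *: star x + star y.
Hypothesis A0 : A 0.
Hypothesis A_lin : forall (a : R[i]) x y, A x -> A y -> A (a *: x + y).
Hypothesis A_triple : forall x, A x -> A (triple mul star x).
Hypothesis r_gt1 : 1 < r.
Hypothesis T_scale : forall x, A x -> T (r%:C *: x) = r%:C *: T x.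
Hypothesis phi_cvg : forall x y z, A x -> A y -> A z ->
  (fun n : nat => r ^- n * phi ((r ^+ n)%:C *: x) ((r ^+ n)%:C *: y)
                               ((r ^+ n)%:C *: z)) @ \oo --> (0 : R).
Hypothesis T_approx : forall (lam : R[i]) x y z, A x -> A y -> A z ->
  `|T (lam *: x + y + triple mul star z) - lam *: T x - T y
     - triple mul star (T z)| <= (phi x y z)%:C.

Local Notation q := (triple mul star).

Let AZ (a : R[i]) x : A x -> A (a *: x).
Proof. by move=> Ax; rewrite -[a *: x]addr0; apply: A_lin. Qed.

Let T0 : T 0 = 0. Proof. exact: scaling_commuting0 A0 r_gt1 T_scale. Qed.

Let T_pow n x : A x -> T ((r ^+ n)%:C *: x) = (r ^+ n)%:C *: T x.
Proof. exact: (scaling_commuting_pow AZ T_scale n). Qed.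

Let pow_ge0 n : 0 <= (r ^+ n)%:C :> R[i].
Proof. by rewrite lecR exprn_ge0 // ltW // (lt_trans ltr01). Qed.

Lemma approx_linear (lam : R[i]) x y :
  A x -> A y -> T (lam *: x + y) = lam *: T x + T y.
Proof.
move=> Ax Ay; have Alxy := A_lin lam Ax Ay; apply/subr0_eq.
apply: (scaled_bound_eq0 r_gt1 (phi_cvg Ax Ay A0)) => n.
have := T_approx lam (AZ (r ^+ n)%:C Ax) (AZ (r ^+ n)%:C Ay)
  (AZ (r ^+ n)%:C A0).
rewrite scaler0 T0 (triple0 mulDl mulDr starD) !addr0 subr0.
rewrite scalerA mulrC -scalerA -scalerDr !T_pow //.
by rewrite scalerA mulrC -scalerA -!scalerBr normrZ ger0_norm // opprD addrA.
Qed.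

Lemma approx_triple z : A z -> T (q z) = q (T z).
Proof.
move=> Az; have Aqz := A_triple Az; apply/subr0_eq.
apply: (scaled_bound_eq0 r_gt1 (phi_cvg A0 A0 Az)) => n.
have := T_approx 0 (AZ (r ^+ n)%:C A0) (AZ (r ^+ n)%:C A0)
  (AZ (r ^+ n)%:C Az).
rewrite !scaler0 scale0r T0 !add0r !subr0.
rewrite (triple_real_pow mulDl mulDr starD) !T_pow //.
rewrite (triple_real_pow mulDl mulDr starD) -scalerBr normrZ ger0_norm //.
apply: le_trans.
by rewrite ler_wpM2r // lecR ler_eXn2l // leq_pmull.
Qed.

Lemma approx_Jstar_hom : is_Jstar_hom mul star A T.
Proof.
split.
- by move=> x y Ax Ay; rewrite -[x]scale1r approx_linear // !scale1r.
- by move=> a x Ax; rewrite -[a *: x]addr0 approx_linear // T0 addr0.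
- exact: approx_triple.
Qed.

End ApproximateJstarHom.

Theorem proposition2p1 (R : realType) (V : completeNormedModType R[i])
    (mul : V -> V -> V) (star : V -> V) (A : set V)
    (T : V -> V) (r : R) (phi : V -> V -> V -> R) :
  is_Cstar_algebra mul star ->
  is_Jstar_algebra mul star A ->
  (forall x, A x -> A (T x)) ->
  1 < r ->
  (forall x, A x -> T (r%:C *: x) = r%:C *: T x) ->
  (forall x y z, A x -> A y -> A z -> 0 <= phi x y z) ->
  (forall x y z, A x -> A y -> A z ->
     (fun n : nat => r ^- n * phi ((r ^+ n)%:C *: x) ((r ^+ n)%:C *: y)
                                  ((r ^+ n)%:C *: z)) @ \oo --> (0 : R)) ->
  (forall (lam : R[i]) x y z, A x -> A y -> A z ->
     `|T (lam *: x + y + mul (mul z (star z)) z) - lam *: T x - T y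
        - mul (mul (T z) (star (T z))) (T z)| <= (phi x y z)%:C) ->
  is_Jstar_hom mul star A T.
Proof.
(* Only the (semi)linearity of the product and the involution is used: neither
   the norm axioms, nor closedness of A, T(A) in A, nor phi >= 0. *)
move=> [_ [mulDl [mulDr [starD _]]]] [A0 A_lin _ A_triple] _ r_gt1 T_scale _.
exact: approx_Jstar_hom.
Qed.
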